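(* Let $V$ be a real vector space of dimension $n$, let $L\subset V$ be a lattice of rank $n$, and let $P\subset V$ be an $n$-dimensional convex polytope with all vertices in $L$. Let $p$ be a prime and let $k$ be an integer with $1\le k\le n-1$. For every integer $0\le l\le n$ we have \[ c_l\bigl(T(p,k)E(P)\bigr)=\nu_{n,k,l}(p)\,c_l\bigl(E(P)\bigr), \] so that the factor $\nu_{n,k,l}(p)$ is independent of $P$. Moreover, for all such $k$ and $l$, \[ \nu_{n,k,l}(p)/\nu_{n,n-k,n-l}(p)=p^{k+l-n}. \] Finally, for each triple $(n,k,l)$ there is a polynomial $\Phi_{n,k,l}(t)\in\mathbb{Z}[t]$ with positive coefficients (all its nonzero coefficients are positive), independent of $p$, such that $\Phi_{n,k,l}(p)=\nu_{n,k,l}(p)$ for every prime $p$.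
   Context: For a lattice $N\subset V$ of rank $n$ and a polytope $Q$ with vertices in $N$, the Ehrhart polynomial $E_N(Q)\in\mathbb{Q}[t]$ is the polynomial with $E_N(Q)(t)=\#(tQ\cap N)$ for all nonnegative integers $t$; write $E(P)=E_L(P)$. For $f\in\mathbb{Q}[t]$, $c_l(f)$ denotes the coefficient of $t^l$. The lattice $p^{-1}L$ contains $L$ and $p^{-1}L/L\cong\mathbb{F}_p^n$; for a lattice $M$ with $L\subsetneq M\subsetneq p^{-1}L$ let $\overline M=M/L\subset p^{-1}L/L$. Let $\mathscr{L}_k$ be the set of such lattices $M$ with $\dim_{\mathbb{F}_p}\overline M=k$. For $M\in\mathscr{L}_k$, $P_M$ denotes $P$ regarded as a lattice polytope with respect to $M$, so $E(P_M)=E_M(P)$. Define $T(p,k)E(P)=\sum_{M\in\mathscr{L}_k}E(P_M)$. For $0\le l\le n$ and $0\le k\le n$, fix an $l$-dimensional subspace $U\subset\mathbb{F}_p^n$ and set $\nu_{n,k,l}(p)=\sum_{W\subset\mathbb{F}_p^n,\ \dim W=k}p^{\dim(W\cap U)}$ (the value does not depend on the choice of $U$). *)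

From HB Require Import structures.
From mathcomp Require Import all_boot all_order all_algebra.
From mathcomp Require Import reals.
Set Implicit Arguments. Unset Strict Implicit. Unset Printing Implicit Defensive.
Import Order.TTheory GRing.Theory Num.Theory.
Local Open Scope ring_scope.

(* Coordinates: V = R^n (row vectors), L = Z^n *m B with B invertible.
   Points of L are  z *m B,  points of p^{-1}L are  p^{-1} (z *m B), z in Z^n. *)

Definition card_is (n : nat) (A : 'rV[int]_n -> Prop) (c : nat) : Prop :=
  exists s : seq 'rV[int]_n, [/\ uniq s, (forall x, A x <-> x \in s) & size s = c].

Definition is_ehrhart (n : nat) (A : nat -> 'rV[int]_n -> Prop) (f : {poly rat}) : Prop :=
  forall t : nat, exists2 c : nat, card_is (A t) c & f.[t%:R] = c%:R.

Section Poly.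
Variables (R : realType) (n m : nat) (B : 'M[R]_n) (V : 'I_m -> 'rV[int]_n).

Definition latL (z : 'rV[int]_n) : 'rV[R]_n := map_mx (fun a : int => a%:~R) z *m B.

Definition latp (p : nat) (z : 'rV[int]_n) : 'rV[R]_n := (p%:R)^-1 *: latL z.

Definition vert (i : 'I_m) : 'rV[R]_n := latL (V i).

Definition in_dil (t : nat) (x : 'rV[R]_n) : Prop :=
  exists w : 'I_m -> R,
    [/\ forall i, 0 <= w i, \sum_i w i = t%:R & x = \sum_i w i *: vert i].

Definition full_dim : Prop :=
  exists i0 : 'I_m, \rank (\matrix_(i < m) (vert i - vert i0)) = n.

End Poly.

(* reduction mod p of integer coordinates: z + L |-> class in p^{-1}L/L = F_p^n *)
Definition redp (p n : nat) (z : 'rV[int]_n) : 'rV['F_p]_n :=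
  map_mx (fun a : int => a%:~R) z.

(* k-dimensional subspaces of F_p^n, each represented by its canonical
   square matrix <<W>> (row space) *)
Definition subsp (p n k : nat) : {set 'M['F_p]_n} :=
  [set W : 'M['F_p]_n | (<<W>>%MS == W) && (\rank W == k)].

(* nu_{n,k,l}(p) with the fixed l-dim subspace U = span of first l basis vectors *)
Definition nu (n k l p : nat) : nat :=
  \sum_(W in subsp p n k) p ^ \rank (W :&: (pid_mx l : 'M['F_p]_n))%MS.

From HB Require Import structures.
From mathcomp Require Import all_boot all_order all_algebra.
From mathcomp Require Import ring lra zify.
From mathcomp Require Import reals.
Set Implicit Arguments. Unset Strict Implicit. Unset Printing Implicit Defensive.
Import Order.TTheory GRing.Theory Num.Theory.
Local Open Scope ring_scope.

(* Count the points x = z/p of tP in p^-1 L, each weighted by the number of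
   k-dimensional subspaces of F_p^n containing the class of z.  A point of L
   (class 0) lies in all G of them, any other point in the A subspaces through a
   fixed line; hence T(p,k)E(P)(t) = A E(P)(pt) + (G - A) E(P)(t), and
   c_l(T(p,k)E(P)) = (G + (p^l - 1) A) c_l(E(P)), where the factor is nu_{n,k,l}(p)
   by the same double count.  Counting bases gives G = [n, k]_p and
   A = [n-1, k-1]_p (Gaussian binomials), so
   nu_{n,k,l}(p) = p^l [n-1, k-1]_p + p^k [n-1, k]_p, a polynomial in p with
   nonnegative coefficients; the symmetry [n, k] = [n, n-k] gives the duality. *)

Fixpoint qbinom (n k : nat) : {poly int} :=
  if k is k'.+1 then
    if n is n'.+1 then qbinom n' k' + 'X^k * qbinom n' k else 0
  else 1.

Lemma qbinomn0 n : qbinom n 0 = 1. Proof. by case: n. Qed.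
Lemma qbinom0S k : qbinom 0 k.+1 = 0. Proof. by []. Qed.
Lemma qbinomSS n k : qbinom n.+1 k.+1 = qbinom n k + 'X^(k.+1) * qbinom n k.+1.
Proof. by []. Qed.

Definition qfalling (n k : nat) : {poly int} := \prod_(0 <= i < k) ('X^(n - i) - 1).

Lemma qfallingSS n k : qfalling n.+1 k.+1 = ('X^(n.+1) - 1) * qfalling n k.
Proof. by rewrite /qfalling big_nat_recl //; under eq_bigr do rewrite subSS. Qed.

Lemma qfallingS n k : qfalling n k.+1 = qfalling n k * ('X^(n - k) - 1).
Proof. by rewrite /qfalling big_nat_recr. Qed.

Lemma qfalling_eq0 n k : (n < k)%N -> qfalling n k = 0.
Proof.
move=> lt_nk; rewrite /qfalling (bigD1_seq n) ?mem_iota ?iota_uniq ?subn0 //=.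
by rewrite subnn expr0 subrr mul0r.
Qed.

Lemma qfalling_split n k : (k <= n)%N ->
  qfalling n n = qfalling n k * qfalling (n - k) (n - k).
Proof.
move=> le_kn; rewrite /qfalling (big_cat_nat (leq0n k) le_kn) /=; congr (_ * _).
by rewrite -{1}[k]add0n big_addn; apply: eq_bigr => i _; rewrite addnC subnDA.
Qed.

Lemma horner_qfalling_neq0 k (x : int) : 1 < x -> (qfalling k k).[x] != 0.
Proof.
move=> gt1x; rewrite /qfalling horner_prod prodf_seq_neq0; apply/allP => i.
rewrite mem_iota add0n => /andP[_ lt_ik] /=.
by rewrite !hornerE subr_eq0 gt_eqF // exprn_egt1 //; lia.
Qed.

Lemma qfalling_neq0 k : qfalling k k != 0.
Proof. by apply: contraTneq (horner_qfalling_neq0 k (x := 2) isT) => ->; rewrite horner0. Qed.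

Lemma qbinom_qfalling n k : qbinom n k * qfalling k k = qfalling n k.
Proof.
elim: n k => [|n IHn] [|k]; rewrite ?qbinomn0 ?mul1r ?[qfalling _ 0]big_geq //.
  by rewrite qbinom0S mul0r qfalling_eq0.
rewrite qbinomSS mulrDl -mulrA (IHn k.+1) qfallingSS mulrCA IHn !qfallingSS qfallingS.
have [le_kn|lt_nk] := leqP k n; last by rewrite qfalling_eq0 //; ring.
have -> : 'X^(n.+1) = 'X^(k.+1) * 'X^(n - k) :> {poly int} by rewrite -exprD addSn subnKC.
ring.
Qed.

Lemma qbinom_pascal n k :
  qbinom n.+1 k.+1 * ('X^(k.+1) - 1) = ('X^(n.+1) - 1) * qbinom n k.
Proof.
apply: (mulIf (qfalling_neq0 k)).
by rewrite -mulrA -qfallingSS qbinom_qfalling qfallingSS -mulrA qbinom_qfalling.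
Qed.

Lemma qbinom_sym n k : (k <= n)%N -> qbinom n k = qbinom n (n - k).
Proof.
move=> le_kn; apply: (mulIf (qfalling_neq0 k)); apply: (mulIf (qfalling_neq0 (n - k))).
rewrite qbinom_qfalling -qfalling_split // -mulrA [qfalling k k * _]mulrC mulrA.
by rewrite qbinom_qfalling (qfalling_split (leq_subr k n)) subKn.
Qed.

Lemma coef_qbinom_ge0 n k i : 0 <= (qbinom n k)`_i.
Proof.
elim: n k i => [|n IHn] [|k] i; rewrite ?qbinomSS ?coefC ?coef0 //; try by case: (i == 0%N).
by rewrite coefD coefXnM addr_ge0 //; case: ifP.
Qed.

Lemma horner_qbinom_ge0 n k (x : int) : 0 <= x -> 0 <= (qbinom n k).[x].
Proof.
move=> ge0x; elim: n k => [|n IHn] [|k]; rewrite ?qbinomSS ?hornerE //.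
by rewrite addr_ge0 ?mulr_ge0 ?exprn_ge0 ?IHn.
Qed.

Lemma horner_qbinom_ge1 n k (x : int) : 1 <= x -> (k <= n)%N -> 1 <= (qbinom n k).[x].
Proof.
move=> ge1x; have ge0x := le_trans ler01 ge1x.
elim: n k => [|n IHn] [|k] //= le_kn; rewrite ?hornerE //.
by rewrite (le_trans (IHn k le_kn)) // lerDl mulr_ge0 ?exprn_ge0 ?horner_qbinom_ge0.
Qed.

Lemma PoszX (a b : nat) : (a ^ b)%N = a%:Z ^+ b :> int.
Proof. by rewrite -!natz natrX. Qed.

Lemma coef_comp_poly_scaleX (F : comNzRingType) (c : F) (f : {poly F}) l :
  (f \Po (c *: 'X))`_l = c ^+ l * f`_l.
Proof.
rewrite comp_polyE.
under eq_bigr => i _ do rewrite exprZn scalerA mulrC.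
rewrite -(poly_def (size f) (fun i => c ^+ i * f`_i)) coef_poly; case: ltnP => // le_fl.
by rewrite nth_default ?mulr0.
Qed.

Lemma eq_poly_natr (D : numDomainType) (f g : {poly D}) :
  (forall t : nat, f.[t%:R] = g.[t%:R]) -> f = g.
Proof.
move=> eq_fg; apply/eqP; rewrite -subr_eq0; apply/eqP.
apply: (@roots_geq_poly_eq0 _ _ [seq i%:R | i <- iota 0 (size (f - g))]).
- by apply/allP => _ /mapP[i _ ->]; rewrite /root !hornerE eq_fg subrr.
- by rewrite map_inj_uniq ?iota_uniq // => i j /eqP; rewrite eqr_nat => /eqP.
- by rewrite size_map size_iota.
Qed.

Lemma sum_count_card (T : eqType) (I : finType) (S : {set I}) (P : I -> pred T) s :
  (\sum_(i in S) count (P i) s)%N = (\sum_(x <- s) #|[set i in S | P i x]|)%N.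
Proof.
under eq_bigr => i _ do rewrite -sum1_count big_mkcond.
rewrite exchange_big; apply: eq_bigr => x _.
rewrite -sum1_card big_mkcond [RHS]big_mkcond; apply: eq_bigr => i _.
by rewrite inE; case: (i \in S); case: (P i x).
Qed.

Section FinFieldSubspaces.
Variable F : finFieldType.
Local Notation q := #|F|.
Let q_gt1 : (1 < q)%N := card_finNzRing_gt1 F.

Lemma card_submx_rV m n (X : 'M[F]_(m, n)) :
  #|[set v : 'rV[F]_n | (v <= X)%MS]| = (q ^ \rank X)%N.
Proof.
have -> : [set v : 'rV[F]_n | (v <= X)%MS] = [set u *m row_base X | u in 'rV_(\rank X)].
  apply/setP => v; rewrite inE -(eq_row_base X).
  by apply/submxP/imsetP => [[u ->] | [u _ ->]]; exists u.
by rewrite card_imset ?card_mx ?mul1n //; apply: row_free_inj (row_base_free X).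
Qed.

Lemma row_free_col_mx_rV m n (v : 'rV[F]_n) (A : 'M[F]_(m, n)) :
  row_free (col_mx v A) = row_free A && ~~ (v <= A)%MS.
Proof.
rewrite /row_free -addsmxE addsmxC.
have le_Ar : (\rank A <= \rank (A + v))%N := mxrankS (addsmxSl A v).
have le_rA1 : (\rank (A + v) <= \rank A + 1)%N.
  by rewrite (leq_trans (mxrank_adds_leqif A v)) // leq_add2l rank_leq_row.
have eq_rA : (\rank A == \rank (A + v)) = (v <= A)%MS.
  by rewrite (mxrank_leqif_sup (addsmxSl A v)) addsmx_sub submx_refl.
have le_Am := rank_leq_row A.
rewrite -eq_rA; apply/eqP/andP => [eq_r | [/eqP eq_Am ne_r]]; first by split; lia.
by move/eqP: ne_r; lia.
Qed.

Lemma card_row_free m n :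
  #|[pred A : 'M[F]_(m, n) | row_free A]| = (\prod_(i < m) (q ^ n - q ^ i))%N.
Proof.
elim: m => [|m IHm].
  rewrite big_ord0 (@eq_card1 _ (0 : 'M_(0, n))) // => A.
  by rewrite flatmx0 !inE /row_free mxrank0 !eqxx.
rewrite big_ord_recr /= -{}IHm -sum_nat_const -sum1_card -add1n.
rewrite (partition_big dsubmx [pred A | row_free A]) /= => [|B]; last first.
  by rewrite !inE -{1}(vsubmxK B) (row_free_col_mx_rV (usubmx B)) => /andP[].
apply: eq_bigr => A freeA; rewrite (reindex (col_mx^~ A)) /=; last first.
  exists usubmx => [v _ | B]; first by rewrite col_mxKu.
  by case/andP=> _ /eqP <-; rewrite vsubmxK.
transitivity #|~: [set v : 'rV[F]_n | (v <= A)%MS]|.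
  rewrite -sum1_card; apply: eq_bigl => v.
  by rewrite col_mxKd eqxx andbT !inE row_free_col_mx_rV freeA.
by rewrite cardsCs setCK card_submx_rV card_mx mul1n (eqP freeA).
Qed.

Definition subspaces n k : {set 'M[F]_n} :=
  [set W : 'M[F]_n | (<<W>>%MS == W) && (\rank W == k)].

Lemma subspacesP n k W : reflect (<<W>>%MS = W /\ \rank W = k) (W \in subspaces n k).
Proof. by rewrite inE; apply: (iffP andP) => [[/eqP-> /eqP->] | [-> ->]]. Qed.

Lemma card_subspaces_row_free n k :
  (#|subspaces n k| * #|[pred A : 'M[F]_k | row_free A]|)%N
    = #|[pred A : 'M[F]_(k, n) | row_free A]|.
Proof.
symmetry; rewrite -[LHS]sum1_card (partition_big (fun A => <<A>>%MS) (mem (subspaces n k))) /=.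
  rewrite -sum_nat_const; apply: eq_bigr => W /subspacesP[genW rankW].
  have [B freeB genB] : exists2 B : 'M_(k, n), row_free B & <<B>>%MS = W.
    rewrite -rankW; exists (row_base W); first exact: row_base_free.
    by rewrite (eq_genmx (eq_row_base W)) genW.
  rewrite -sum1_card (reindex_onto (mulmx^~ B) (mulmx^~ (pinvmx B))) /=; last first.
    move=> A /andP[_ /eqP genA]; apply: mulmxKpV.
    by rewrite -genmxE genA -genB genmxE.
  apply: eq_bigl => M; rewrite !inE /row_free mxrankMfree // mulmxKp // eqxx andbT.
  case freeM: (\rank M == k) => //=.
  by rewrite (eq_genmx (eqmxMfull B _)) ?genB ?eqxx.
by move=> A freeA; rewrite inE genmx_id mxrank_gen eqxx.
Qed.

Lemma card_row_free_qfalling m n : (m <= n)%N ->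
  (#|[pred A : 'M[F]_(m, n) | row_free A]| : int)
    = \prod_(i < m) q%:Z ^+ i * (qfalling n m).[q%:Z].
Proof.
move=> le_mn; rewrite card_row_free /qfalling horner_prod big_mkord.
rewrite -natz natr_prod -big_split /=; apply: eq_bigr => i _.
have le_in : (i <= n)%N by rewrite (leq_trans (ltnW (ltn_ord i))).
rewrite natrB ?leq_pexp2l ?(ltnW q_gt1) // !hornerE !natrX !natz.
by rewrite mulrBr mulr1 -exprD subnKC.
Qed.

Lemma card_subspaces n k : (k <= n)%N -> (#|subspaces n k| : int) = (qbinom n k).[q%:Z].
Proof.
move=> le_kn; have nz_q : q%:Z != 0 by rewrite eqz_nat -lt0n (ltn_trans _ q_gt1).
have nz_qpowers : \prod_(i < k) q%:Z ^+ i != 0.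
  by apply/prodf_neq0 => i _; rewrite expf_neq0.
have nz_qfalling : (qfalling k k).[q%:Z] != 0.
  by rewrite horner_qfalling_neq0 // ltz_nat q_gt1.
have /(congr1 Posz) := card_subspaces_row_free n k.
rewrite PoszM !card_row_free_qfalling // -(qbinom_qfalling n k) hornerM mulrCA.
by move=> /(mulfI nz_qpowers) /(mulIf nz_qfalling).
Qed.

Definition subspaces_thru n k (v : 'rV[F]_n) : {set 'M[F]_n} :=
  [set W in subspaces n k | (v <= W)%MS].

Lemma subspaces_thru0 n k : subspaces_thru k (0 : 'rV[F]_n) = subspaces n k.
Proof. by apply/setP => W; rewrite inE sub0mx andbT. Qed.

Lemma card_subspaces_thru_unitmx n k (v : 'rV[F]_n) (M : 'M[F]_n) : M \in unitmx ->
  #|subspaces_thru k (v *m M)| = #|subspaces_thru k v|.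
Proof.
suff le_thru u (N : 'M[F]_n) :
    N \in unitmx -> (#|subspaces_thru k u| <= #|subspaces_thru k (u *m N)|)%N.
  move=> unitM; apply/eqP; rewrite eqn_leq le_thru // andbT.
  by rewrite -{2}[v](mulmxK unitM) le_thru ?unitmx_inv.
move=> unitN; have freeN : row_free N by rewrite row_free_unit.
rewrite -(@card_in_imset _ _ (fun W => <<W *m N>>%MS)).
  apply/subset_leq_card/subsetP => _ /imsetP[W /setIdP[/subspacesP[_ rankW] uW] ->].
  by rewrite !inE genmx_id eqxx mxrank_gen mxrankMfree // rankW eqxx genmxE submxMfree.
move=> W1 W2 /setIdP[/subspacesP[genW1 _] _] /setIdP[/subspacesP[genW2 _] _].
by move/genmxP; rewrite !submxMfree // => /genmxP; rewrite genW1 genW2.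
Qed.

Lemma card_subspaces_thru_eqmx n k (u v : 'rV[F]_n) :
  (u :=: v)%MS -> #|subspaces_thru k u| = #|subspaces_thru k v|.
Proof. by move=> eq_uv; apply: eq_card => W; rewrite !inE eq_uv. Qed.

Lemma card_subspaces_thru_neq0 n k (v : 'rV[F]_n) : v != 0 ->
  #|subspaces_thru k v| = #|subspaces_thru k (pid_mx 1 : 'rV[F]_n)|.
Proof.
move=> nz_v; have unit_col := col_ebase_unit v.
have -> : v = col_ebase v *m pid_mx 1 *m row_ebase v.
  by rewrite -{1}(mulmx_ebase v) rank_rV nz_v.
rewrite card_subspaces_thru_unitmx ?row_ebase_unit //.
by apply/card_subspaces_thru_eqmx/eqmxMfull; rewrite row_full_unit.
Qed.

Lemma sum_exp_rank_capmx n k (U : 'M[F]_n) :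
  (\sum_(W in subspaces n k) q ^ \rank (W :&: U))%N
    = (#|subspaces n k| + (q ^ \rank U - 1) * #|subspaces_thru k (pid_mx 1 : 'rV[F]_n)|)%N.
Proof.
have double_count : (\sum_(W in subspaces n k) q ^ \rank (W :&: U))%N
    = (\sum_(v : 'rV[F]_n | (v <= U)%MS) #|subspaces_thru k v|)%N.
  under eq_bigr => W _ do rewrite -card_submx_rV -sum1_card big_mkcond /=.
  rewrite exchange_big [RHS]big_mkcond /=; apply: eq_bigr => v _.
  case: ifP => vU; last by apply: big1 => W _; rewrite inE sub_capmx vU andbF.
  rewrite -sum1_card [RHS]big_mkcond [LHS]big_mkcond; apply: eq_bigr => W _.
  by rewrite !inE sub_capmx vU andbT; case: (_ && _).
rewrite double_count (bigD1 0) ?sub0mx //= subspaces_thru0; congr (_ + _)%N.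
rewrite (eq_bigr (fun _ => #|subspaces_thru k (pid_mx 1 : 'rV[F]_n)|)); last first.
  by move=> v /andP[_ nz_v]; rewrite card_subspaces_thru_neq0.
rewrite sum_nat_const -card_submx_rV (cardsD1 0 [set v : 'rV[F]_n | (v <= U)%MS]).
rewrite inE sub0mx add1n subn1 /=.
by congr (_ * _)%N; apply: eq_card => v; rewrite !inE andbC.
Qed.

Lemma card_subspaces_thru n k : (k <= n)%N ->
  (#|subspaces_thru k.+1 (pid_mx 1 : 'rV[F]_n.+1)| : int) = (qbinom n k).[q%:Z].
Proof.
move=> le_kn; have := sum_exp_rank_capmx k.+1 (1%:M : 'M[F]_n.+1).
under eq_bigr => W /subspacesP[_ rankW] do rewrite capmx1 rankW.
rewrite mxrank1 sum_nat_const => /(congr1 Posz).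
rewrite PoszD !PoszM -subzn ?expn_gt0 ?(ltn_trans _ q_gt1) // card_subspaces // !PoszX.
have := congr1 (horner^~ q%:Z) (qbinom_pascal n k); rewrite !hornerE => pascal.
have nz_qn1 : q%:Z ^+ n.+1 - 1 != 0 by rewrite subr_eq0 gt_eqF // exprn_egt1 // ltz_nat q_gt1.
(* count : G q^(k+1) = G + (q^(n+1) - 1) A, with G = [n+1, k+1]_q *)
move=> count; apply: (mulfI nz_qn1); rewrite -pascal; lra.
Qed.

Lemma sum_card_subspaces_thru n k (s : seq 'rV[F]_n) :
  (\sum_(v <- s) #|subspaces_thru k v|)%N
    = (#|subspaces n k| * count (pred1 0%R) s
       + #|subspaces_thru k (pid_mx 1 : 'rV[F]_n)| * count (predC1 0%R) s)%N.
Proof.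
elim: s => [|v s IHs]; first by rewrite big_nil !muln0.
rewrite big_cons IHs /=; have [-> | nz_v] := eqVneq v 0.
  by rewrite subspaces_thru0 /=; ring.
by rewrite card_subspaces_thru_neq0 //=; ring.
Qed.

End FinFieldSubspaces.

Section Nu.
Variables (p : nat) (p_pr : prime p).

Lemma nuE n k l : (l <= n)%N ->
  nu n k l p = (#|subspaces 'F_p n k|
                + (p ^ l - 1) * #|subspaces_thru k (pid_mx 1 : 'rV['F_p]_n)|)%N.
Proof.
move=> le_ln; have := sum_exp_rank_capmx k (pid_mx l : 'M['F_p]_n).
by rewrite card_Fp // rank_pid_mx.
Qed.

Lemma nu_qbinom n k l : (k <= n)%N -> (l <= n.+1)%N ->
  nu n.+1 k.+1 l p
    = p%:Z ^+ l * (qbinom n k).[p%:Z] + p%:Z ^+ k.+1 * (qbinom n k.+1).[p%:Z] :> int.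
Proof.
move=> le_kn le_ln; have := card_subspaces_thru 'F_p le_kn.
have := @card_subspaces 'F_p n.+1 k.+1 le_kn; rewrite nuE // card_Fp //.
rewrite PoszD PoszM -subzn ?expn_gt0 ?prime_gt0 // PoszX => -> ->.
by rewrite qbinomSS hornerD hornerM hornerXn; ring.
Qed.

Lemma nu_gt0 n k l : (k <= n)%N -> (l <= n)%N -> (0 < nu n k l p)%N.
Proof.
move=> le_kn le_ln; rewrite nuE // ltn_addr // -ltz_nat card_subspaces //.
by rewrite card_Fp // (lt_le_trans ltr01) // horner_qbinom_ge1 // lez_nat prime_gt0.
Qed.

Lemma nu_dual n k l : (0 < k < n)%N -> (l <= n)%N ->
  (nu n (n - k) (n - l) p * p ^ (k + l) = p ^ n * nu n k l p)%N.
Proof.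
case: n k => [|n] [|k] // /andP[_]; rewrite ltnS => lt_kn le_ln; apply/eqP.
rewrite -eqz_nat !PoszM !PoszX subSS; apply/eqP.
have -> : (n - k = (n - k.+1).+1)%N by lia.
rewrite !nu_qbinom ?leq_subr ?(ltnW lt_kn) // -(qbinom_sym lt_kn).
have -> : ((n - k.+1).+1 = n - k)%N by lia.
rewrite -(qbinom_sym (ltnW lt_kn)) mulrDl !(mulrAC _ _ (p%:Z ^+ (k.+1 + l))) -!exprD.
have -> : (n.+1 - l + (k.+1 + l) = n.+1 + k.+1)%N by lia.
have -> : (n - k + (k.+1 + l) = n.+1 + l)%N by lia.
by rewrite !exprD; ring.
Qed.

Lemma nu_ratio n k l : (0 < k < n)%N -> (l <= n)%N ->
  (nu n k l p)%:R / (nu n (n - k) (n - l) p)%:R = (p%:R : rat) ^ ((k + l)%:Z - n%:Z).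
Proof.
move=> lt0kn le_ln.
have nz_p : (p%:R : rat) != 0 by rewrite pnatr_eq0 -lt0n prime_gt0.
have nz_nu : (nu n (n - k) (n - l) p)%:R != 0 :> rat.
  by rewrite pnatr_eq0 -lt0n nu_gt0 ?leq_subr.
have /(congr1 (GRing.natmul (1 : rat))) := nu_dual lt0kn le_ln.
rewrite !natrM !natrX expfzDr // -exprnN => dual.
by apply/eqP; rewrite eqr_div ?expf_neq0 // mulrC -dual mulrC.
Qed.

End Nu.

Lemma nu_poly n k l : (0 < k < n)%N -> (l <= n)%N ->
  exists Phi : {poly int},
    (forall i, Phi`_i != 0 -> 0 < Phi`_i) /\
    (forall q : nat, prime q -> Phi.[q%:Z] = (nu n k l q)%:Z).
Proof.
case: n k => [|n] [|k] // /andP[_]; rewrite ltnS => lt_kn le_ln.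
exists ('X^l * qbinom n k + 'X^(k.+1) * qbinom n k.+1); split=> [i nz_i | q q_pr].
  by rewrite lt_def nz_i coefD !coefXnM addr_ge0 //; case: ifP; rewrite ?coef_qbinom_ge0.
by rewrite (nu_qbinom q_pr) ?(ltnW lt_kn) // hornerD !hornerM !hornerXn.
Qed.

Lemma card_is_count n (A C : 'rV[int]_n -> Prop) (P : pred 'rV[int]_n) s c :
  uniq s -> (forall x, A x <-> x \in s) -> (forall x, C x <-> P x /\ A x) ->
  card_is C c -> c = count P s.
Proof.
move=> uniq_s memA memC [s' [uniq_s' memC' <-]]; rewrite -size_filter.
apply/perm_size/uniq_perm; rewrite ?filter_uniq // => x.
rewrite mem_filter; apply/idP/andP => [/memC'/memC[-> /memA] | [Px /memA Ax]] //.
by apply/memC'/memC.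
Qed.

Lemma card_is_image n (f : 'rV[int]_n -> 'rV[int]_n) (A : 'rV[int]_n -> Prop) c :
  injective f ->
  card_is A c -> card_is (fun y => exists2 x, A x & y = f x) c.
Proof.
move=> inj_f [s [uniq_s memA <-]]; exists (map f s); split; rewrite ?size_map ?map_inj_uniq //.
by move=> y; split=> [[x /memA s_x ->] | /mapP[x /memA Ax ->]]; [apply: map_f | exists x].
Qed.

Lemma redp_eq0P p n (z : 'rV[int]_n) : prime p ->
  reflect (exists z', z = p%:Z *: z') (redp p z == 0).
Proof.
move=> p_pr; have dvdpE := dvdz_pcharf (pchar_Fp p_pr).
apply: (iffP eqP) => [/matrixP z0 | [z' ->]].
  exists (\matrix_(i, j) (z i j %/ p%:Z)%Z); apply/matrixP => i j; rewrite !mxE mulrC divzK //.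
  by have := z0 i j; rewrite !mxE dvdpE => ->.
by apply/matrixP => i j; rewrite !mxE; apply/eqP; rewrite -dvdpE dvdz_mulr.
Qed.

Section EhrhartCount.
Variables (R : realType) (n m : nat) (B : 'M[R]_n) (V : 'I_m -> 'rV[int]_n).

Lemma in_dil_scale (c t : nat) (y : 'rV[R]_n) : (0 < c)%N ->
  in_dil B V t (c%:R^-1 *: y) <-> in_dil B V (c * t) y.
Proof.
move=> c_gt0; have nz_c : (c%:R : R) != 0 by rewrite pnatr_eq0 -lt0n.
split=> [[w [w_ge0 sum_w yE]] | [w [w_ge0 sum_w ->]]].
  exists (fun i => c%:R * w i); split=> [i | |].
  - by rewrite mulr_ge0 ?ler0n.
  - by rewrite -mulr_sumr sum_w natrM.
  - by rewrite -[y](scalerKV nz_c) yE scaler_sumr; apply: eq_bigr => i _; rewrite scalerA.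
exists (fun i => c%:R^-1 * w i); split=> [i | |].
- by rewrite mulr_ge0 ?invr_ge0 ?ler0n.
- by rewrite -mulr_sumr sum_w natrM mulKf.
- by rewrite scaler_sumr; apply: eq_bigr => i _; rewrite scalerA.
Qed.

Lemma latp_scale p (z : 'rV[int]_n) : (0 < p)%N -> latp B p (p%:Z *: z) = latL B z.
Proof.
move=> p_gt0; rewrite /latp /latL.
have -> : map_mx (fun a : int => a%:~R) (p%:Z *: z)
    = p%:R *: map_mx (fun a : int => a%:~R : R) z.
  by apply/matrixP => i j; rewrite !mxE intrM.
by rewrite -scalemxAl scalerA mulVf ?scale1r // pnatr_eq0 -lt0n.
Qed.

Variables (p k : nat) (E : {poly rat}) (EM : 'M['F_p]_n -> {poly rat}).
Hypotheses (p_pr : prime p) (ehrE : is_ehrhart (fun t z => in_dil B V t (latL B z)) E).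
Hypothesis ehrEM : forall W, W \in subsp p n k ->
  is_ehrhart (fun t z => (redp p z <= W)%MS /\ in_dil B V t (latp B p z)) (EM W).

Local Notation G := #|subspaces 'F_p n k|.
Local Notation A := #|subspaces_thru k (pid_mx 1 : 'rV['F_p]_n)|.

Lemma horner_sum_EM t :
  (\sum_(W in subsp p n k) EM W).[t%:R] = A%:R * E.[(p * t)%N%:R] + (G%:R - A%:R) * E.[t%:R].
Proof.
have p_gt0 := prime_gt0 p_pr.
have [cT [sT [uniq_sT memT size_sT]] ET] := ehrE (p * t).
have [c0 ehr0 E0] := ehrE t.
have {}memT z : in_dil B V t (latp B p z) <-> z \in sT by rewrite -memT; apply: in_dil_scale.
have EM_count W : W \in subsp p n k ->
    (EM W).[t%:R] = (count (fun z => redp p z <= W)%MS sT)%:R.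
  move=> W_k; have [cW ehrW ->] := ehrEM W_k t; congr _%:R.
  exact: card_is_count memT _ ehrW.
have zero_count : count (fun z => redp p z == 0) sT = c0.
  apply/esym/(card_is_count uniq_sT memT _ (card_is_image (f := *:%R p%:Z) _ ehr0)).
    move=> z; split=> [[z' ehr_z' ->] | [/(redp_eq0P _ p_pr)[z' ->]]].
      by split; [apply/(redp_eq0P _ p_pr); exists z' | rewrite latp_scale].
    by rewrite latp_scale // => ehr_z'; exists z'.
  by apply: scalemx_inj; rewrite eqz_nat -lt0n.
have le_c0T : (c0 <= cT)%N by rewrite -zero_count -size_sT count_size.
have nz_count : count (fun z => redp p z != 0) sT = (cT - c0)%N.
  by rewrite -size_sT -zero_count -(count_predC (fun z => redp p z == 0)) addKn.
rewrite horner_sum (eq_bigr _ EM_count) -natr_sum sum_count_card.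
have -> : (\sum_(z <- sT) #|[set W in subsp p n k | (redp p z <= W)%MS]|)%N
    = (\sum_(v <- map (@redp p n) sT) #|subspaces_thru k v|)%N by rewrite big_map.
rewrite sum_card_subspaces_thru !count_map zero_count nz_count ET E0.
by rewrite natrD !natrM natrB //; ring.
Qed.

Lemma sum_EM :
  \sum_(W in subsp p n k) EM W = A%:R *: (E \Po (p%:R *: 'X)) + (G%:R - A%:R) *: E.
Proof.
apply: eq_poly_natr => t.
by rewrite horner_sum_EM hornerD !hornerZ horner_comp hornerZ hornerX natrM.
Qed.

End EhrhartCount.

Unset Implicit Arguments.

Theorem theorem1p1 (R : realType) (n m : nat) (B : 'M[R]_n)
  (V : 'I_m -> 'rV[int]_n) (p k : nat) :
  B \in unitmx -> full_dim B V -> prime p -> (0 < k < n)%N ->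
  forall (E : {poly rat}) (EM : 'M['F_p]_n -> {poly rat}),
  is_ehrhart (fun t z => in_dil B V t (latL B z)) E ->
  (forall W, W \in subsp p n k ->
     is_ehrhart (fun t z => (redp p z <= W)%MS /\ in_dil B V t (latp B p z)) (EM W)) ->
  [/\ forall l : nat, (l <= n)%N ->
        (\sum_(W in subsp p n k) EM W)`_l = (nu n k l p)%:R * E`_l,
      forall l : nat, (l <= n)%N ->
        (nu n k l p)%:R / (nu n (n - k) (n - l) p)%:R
          = (p%:R : rat) ^ ((k + l)%:Z - n%:Z)
    & forall l : nat, (l <= n)%N ->
        exists Phi : {poly int},
          (forall i, Phi`_i != 0 -> 0 < Phi`_i) /\
          (forall q : nat, prime q -> Phi.[q%:Z] = (nu n k l q)%:Z)].
Proof.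
move=> _ _ p_pr lt0kn E EM ehrE ehrEM.
split=> l le_ln; [|exact: nu_ratio | exact: nu_poly].
rewrite (sum_EM p_pr ehrE ehrEM) coefD !coefZ coef_comp_poly_scaleX nuE //.
by rewrite natrD natrM natrB ?expn_gt0 ?prime_gt0 // natrX; ring.
Qed.
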